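(* Let $\alpha\in(0,1)$ be irrational and let $s_\alpha$ be a Sturmian word of angle $\alpha$. If $s_\alpha$ is $\beta$-power free for some $\beta\ge 2$, then $s_\alpha$ is uniformly abelian-square rich.
   Context: Alphabet $\{a,b\}$; $\{x\}=x-\lfloor x\rfloor$. For irrational $\alpha\in(0,1)$ and $\rho\in[0,1)$, the Sturmian word $s_{\alpha,\rho}=c_0c_1\cdots$ has $c_m=b$ if $\{\rho+m\alpha\}\in[0,1-\alpha)$ and $c_m=a$ otherwise (or with intervals $(0,1-\alpha]$ and $(1-\alpha,1]$); $s_\alpha$ denotes any such word. An infinite word is $\beta$-power free if for every nonempty factor $v$, the ratio of $|v|$ to the minimal period of $v$ is smaller than $\beta$. An abelian square is a word $v_1v_2$ with $v_1,v_2$ having the same numbers of each letter. An infinite word $w$ is uniformly abelian-square rich if there is a constant $C>0$ such that for all sufficiently large $n$, every factor of $w$ of length $n$ has at least $Cn^2$ distinct factors that are abelian squares. *)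

From Stdlib Require Import Reals Lra Lia ZArith Arith List.
Import ListNotations.
Open Scope R_scope.

Inductive letter : Set := la | lb.

Definition letter_eq_dec : forall x y : letter, {x = y} + {x <> y}.
Proof. decide equality. Defined.

Definition word := list letter.
Definition infword := nat -> letter.

Definition frac (x : R) : R := x - IZR (Int_part x).

Definition irrational (x : R) : Prop :=
  ~ exists (p : Z) (q : nat), (0 < q)%nat /\ x = IZR p / INR q.

Definition sturmian_lower (alpha rho : R) : infword := fun m =>
  if Rlt_dec (frac (rho + INR m * alpha)) (1 - alpha) then lb else la.

(* variant with intervals (0, 1-alpha] (letter b) and (1-alpha, 1] (letter a);
   here {x} = 0 is read as the point 1 of (1-alpha,1] (ceiling convention). *)
Definition sturmian_upper (alpha rho : R) : infword := fun m =>
  if Rlt_dec 0 (frac (rho + INR m * alpha)) then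
    if Rle_dec (frac (rho + INR m * alpha)) (1 - alpha) then lb else la
  else la.

Definition sturmian (upper : bool) (alpha rho : R) : infword :=
  if upper then sturmian_upper alpha rho else sturmian_lower alpha rho.

Definition factor_at (w : infword) (i n : nat) : word := map w (seq i n).

Definition is_factor (w : infword) (v : word) : Prop :=
  exists i, v = factor_at w i (length v).

Definition is_subfactor (u v : word) : Prop :=
  exists x y, u = x ++ v ++ y.

Definition is_period (v : word) (p : nat) : Prop :=
  (0 < p)%nat /\ forall i, (i + p < length v)%nat -> nth i v la = nth (i + p) v la.

Definition is_min_period (v : word) (p : nat) : Prop :=
  is_period v p /\ forall q, (0 < q < p)%nat -> ~ is_period v q.

Definition power_free (beta : R) (w : infword) : Prop :=
  forall v p, is_factor w v -> v <> [] -> is_min_period v p ->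
    INR (length v) / INR p < beta.

Definition parikh_eq (v1 v2 : word) : Prop :=
  count_occ letter_eq_dec v1 la = count_occ letter_eq_dec v2 la /\
  count_occ letter_eq_dec v1 lb = count_occ letter_eq_dec v2 lb.

Definition abelian_square (v : word) : Prop :=
  exists v1 v2, v = v1 ++ v2 /\ parikh_eq v1 v2.

Definition has_many_ab_squares (u : word) (k : R) : Prop :=
  exists L : list word, NoDup L /\
    (forall v, In v L -> is_subfactor u v /\ abelian_square v) /\
    k <= INR (length L).

Definition unif_ab_square_rich (w : infword) : Prop :=
  exists C : R, 0 < C /\ exists N : nat, forall n : nat, (N <= n)%nat ->
    forall u : word, is_factor w u -> length u = n ->
      has_many_ab_squares u (C * INR n ^ 2).

From Stdlib Require Import Reals Lra Lia ZArith Arith List Classical.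
Import ListNotations.
Open Scope R_scope.

(* Let [H j] count the letters [a] in the first [j] letters (up to a constant); for a
   Sturmian word it is the floor (or ceiling) of [rho + j alpha], so a factor of length
   [m] contains [Int_part (m alpha)] or [Int_part (m alpha) + 1] letters [a], and the
   number of [a]'s over [L] consecutive windows of length [m] is [m L alpha] up to [m].
   The factor [w[i, i+2m)] is an abelian square when its halves have the same number of
   [a]'s.  If [m alpha] lies within [1/3] of an integer, one of the two values is rare,
   so at least [2m] of any [12m] consecutive positions start an abelian square of length
   [2m].  For [m = Kr] with [beta <= K], power-freeness forbids equal factors of length
   [2m] at distance less than [r], so one block of [r] positions yields [r/6] distinct
   squares.  Letting [r] range over [n/(56K), n/(28K)] (doubling [Kr] when [Kr alpha] is
   not near an integer) gives quadratically many abelian squares in a factor of length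
   [n]. *)

Lemma Int_part_bnd (x : R) : IZR (Int_part x) <= x < IZR (Int_part x) + 1.
Proof. destruct (base_Int_part x); lra. Qed.

Lemma Int_part_eq (x : R) (z : Z) : IZR z <= x -> x < IZR z + 1 -> Int_part x = z.
Proof.
  intros H1 H2. unfold Int_part.
  assert (up x = (z + 1)%Z) as ->; [|lia].
  symmetry; apply tech_up; rewrite plus_IZR; lra.
Qed.

Lemma Int_part_add_step (x a : R) : 0 < a < 1 ->
  (frac x < 1 - a /\ Int_part (x + a) = Int_part x) \/
  (~ frac x < 1 - a /\ Int_part (x + a) = (Int_part x + 1)%Z).
Proof.
  intros Ha. destruct (Int_part_bnd x). unfold frac.
  destruct (Rlt_dec (x - IZR (Int_part x)) (1 - a)).
  - left; split; auto. apply Int_part_eq; lra.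
  - right; split; auto. apply Int_part_eq; rewrite plus_IZR; lra.
Qed.

Definition ceilZ (x : R) : Z := (- Int_part (- x))%Z.

Lemma ceilZ_bnd (x : R) : x <= IZR (ceilZ x) < x + 1.
Proof. unfold ceilZ. destruct (Int_part_bnd (-x)). rewrite opp_IZR. lra. Qed.

Lemma ceilZ_add_step (x a : R) : 0 < a < 1 ->
  (0 < frac x /\ frac x <= 1 - a /\ ceilZ (x + a) = ceilZ x) \/
  ((~ 0 < frac x \/ ~ frac x <= 1 - a) /\ ceilZ (x + a) = (ceilZ x + 1)%Z).
Proof.
  intros Ha. destruct (Int_part_bnd x). unfold frac, ceilZ.
  set (z := Int_part x) in *.
  destruct (Rlt_dec 0 (x - IZR z)); [destruct (Rle_dec (x - IZR z) (1 - a))|].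
  - left; repeat split; auto.
    rewrite (Int_part_eq (-x) (-z-1)), (Int_part_eq (-(x+a)) (-z-1));
      try lia; rewrite ?minus_IZR, ?opp_IZR; lra.
  - right; split; auto.
    rewrite (Int_part_eq (-x) (-z-1)), (Int_part_eq (-(x+a)) (-z-2));
      try lia; rewrite ?minus_IZR, ?opp_IZR; lra.
  - right; split; auto.
    rewrite (Int_part_eq (-x) (-z)), (Int_part_eq (-(x+a)) (-z-1));
      try lia; rewrite ?minus_IZR, ?opp_IZR; lra.
Qed.

Fixpoint range_sum (f : nat -> Z) (a L : nat) : Z :=
  match L with 0 => 0%Z | S L' => (f a + range_sum f (S a) L')%Z end.

Fixpoint range_count (p : nat -> bool) (a L : nat) : nat :=
  match L with 0 => 0%nat | S L' => ((if p a then 1 else 0) + range_count p (S a) L')%nat end.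

Lemma range_sum_succ_start (f : nat -> Z) m a :
  (range_sum f (S a) m - range_sum f a m = f (a + m)%nat - f a)%Z.
Proof.
  revert a; induction m; intros a; simpl.
  - rewrite Nat.add_0_r. lia.
  - specialize (IHm (S a)). rewrite Nat.add_succ_r. simpl in IHm. lia.
Qed.

Lemma range_sum_increments (f : nat -> Z) m a L :
  range_sum (fun i => f (i + m)%nat - f i)%Z a L = (range_sum f (a + L) m - range_sum f a m)%Z.
Proof.
  revert a; induction L; intros a; simpl.
  - rewrite Nat.add_0_r. lia.
  - rewrite IHL, Nat.add_succ_r. pose proof (range_sum_succ_start f m a). simpl. lia.
Qed.

Lemma range_sum_two_values (f : nat -> Z) k a L :
  (forall i, f i = k \/ f i = (k + 1)%Z) ->
  range_sum f a L = (Z.of_nat L * k + Z.of_nat (range_count (fun i => Z.eqb (f i) (k + 1)) a L))%Z /\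
  range_sum f a L = (Z.of_nat L * (k + 1) - Z.of_nat (range_count (fun i => Z.eqb (f i) k) a L))%Z.
Proof.
  intros Hf. revert a; induction L; intros a; cbn [range_sum range_count]; [lia|].
  destruct (IHL (S a)) as [IH1 IH2]. rewrite IH1 at 1. rewrite IH2.
  destruct (Hf a) as [E|E]; rewrite E, ?Z.eqb_refl.
  - replace (k =? k + 1)%Z with false by (symmetry; apply Z.eqb_neq; lia). lia.
  - replace (k + 1 =? k)%Z with false by (symmetry; apply Z.eqb_neq; lia). lia.
Qed.

Lemma range_count_app p a L1 L2 :
  range_count p a (L1 + L2) = (range_count p a L1 + range_count p (a + L1) L2)%nat.
Proof.
  revert a; induction L1; intros a; simpl.
  - rewrite Nat.add_0_r; auto.
  - rewrite IHL1, Nat.add_succ_r. simpl. lia.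
Qed.

Lemma range_count_shift p m a L :
  range_count (fun i => p (i + m)%nat) a L = range_count p (a + m) L.
Proof. revert a; induction L; intros a; simpl; auto. Qed.

Lemma range_count_cover (p q r : nat -> bool) a L :
  (forall i, p i = true \/ q i = true \/ r i = true) ->
  (L <= range_count p a L + range_count q a L + range_count r a L)%nat.
Proof.
  intros Hc. revert a; induction L; intros a; simpl; [lia|].
  specialize (IHL (S a)). destruct (Hc a) as [E|[E|E]]; rewrite E;
    destruct (p a), (q a), (r a); lia.
Qed.

Lemma range_count_filter p a L : length (filter p (seq a L)) = range_count p a L.
Proof. revert a; induction L; intros a; simpl; auto. destruct (p a); simpl; rewrite IHL; auto. Qed.

Lemma range_count_pigeonhole p l B a : exists b, (b <= B)%nat /\
  (range_count p a (S B * l) <= S B * range_count p (a + b * l) l)%nat.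
Proof.
  revert a; induction B as [|B IH]; intros a.
  - exists 0%nat. simpl. rewrite !Nat.add_0_r. lia.
  - destruct (IH (a + l)%nat) as [b [Hb1 Hb2]].
    replace (a + l + b * l)%nat with (a + S b * l)%nat in Hb2 by lia.
    replace (S (S B) * l)%nat with (l + S B * l)%nat by lia.
    rewrite range_count_app.
    destruct (le_lt_dec (range_count p (a + S b * l) l) (range_count p a l)).
    + exists 0%nat. rewrite Nat.add_0_r. split; nia.
    + exists (S b). split; nia.
Qed.

Lemma length_factor_at w i n : length (factor_at w i n) = n.
Proof. unfold factor_at. rewrite length_map, length_seq. auto. Qed.

Lemma factor_at_add w i a b :
  factor_at w i (a + b) = factor_at w i a ++ factor_at w (i + a) b.
Proof. unfold factor_at. rewrite seq_app, map_app. auto. Qed.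

Lemma nth_factor_at w i n j : (j < n)%nat -> nth j (factor_at w i n) la = w (i + j)%nat.
Proof.
  intros Hj. unfold factor_at. rewrite nth_indep with (d' := w 0%nat).
  - rewrite map_nth, seq_nth; auto.
  - rewrite length_map, length_seq; auto.
Qed.

Lemma is_subfactor_factor_at w s n i M : (s <= i)%nat -> (i + M <= s + n)%nat ->
  is_subfactor (factor_at w s n) (factor_at w i M).
Proof.
  intros H1 H2. exists (factor_at w s (i - s)), (factor_at w (i + M) (s + n - (i + M))).
  replace n with ((i - s) + (M + (s + n - (i + M))))%nat at 1 by lia.
  rewrite !factor_at_add. do 3 f_equal; lia.
Qed.

Lemma count_occ_la_lb (v : word) :
  (count_occ letter_eq_dec v la + count_occ letter_eq_dec v lb = length v)%nat.
Proof. induction v as [|[] v IH]; simpl; lia. Qed.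

Lemma min_period_exists v d : is_period v d -> exists p, (p <= d)%nat /\ is_min_period v p.
Proof.
  intros Pd.
  destruct (Wf_nat.dec_inh_nat_subset_has_unique_least_element (is_period v))
    as [p [[Pp Pmin] _]].
  - intros n; apply classic.
  - exists d; auto.
  - exists p. split; [auto|]. split; auto. intros q Hq Pq. specialize (Pmin q Pq). lia.
Qed.

Definition height (w : infword) (H : nat -> Z) : Prop :=
  forall j, (w j = la /\ H (S j) = (H j + 1)%Z) \/ (w j = lb /\ H (S j) = H j).

Definition balanced (H : nat -> Z) (alpha : R) : Prop :=
  forall i L, -1 < IZR (H (i + L)%nat) - IZR (H i) - INR L * alpha < 1.

Definition height_gain (H : nat -> Z) (m i : nat) : Z := (H (i + m)%nat - H i)%Z.

Section Heights.

Variables (w : infword) (H : nat -> Z) (alpha : R).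
Hypothesis (Hw : height w H) (Hbal : balanced H alpha).

Lemma count_la_factor_at m i :
  Z.of_nat (count_occ letter_eq_dec (factor_at w i m) la) = height_gain H m i.
Proof.
  unfold height_gain. revert i; induction m; intros i.
  - simpl. rewrite Nat.add_0_r. lia.
  - unfold factor_at in *. simpl. specialize (IHm (S i)). simpl Nat.add in IHm.
    rewrite Nat.add_succ_r.
    destruct (Hw i) as [[-> E]|[-> E]]; simpl; lia.
Qed.

Lemma abelian_square_factor_at i m :
  height_gain H m i = height_gain H m (i + m) -> abelian_square (factor_at w i (m + m)).
Proof.
  intros E. exists (factor_at w i m), (factor_at w (i + m) m).
  split; [apply factor_at_add|].
  pose proof (count_la_factor_at m i). pose proof (count_la_factor_at m (i + m)).
  pose proof (count_occ_la_lb (factor_at w i m)).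
  pose proof (count_occ_la_lb (factor_at w (i + m) m)).
  rewrite !length_factor_at in *. split; lia.
Qed.

Lemma range_sum_height_bnd L m a :
  INR m * INR L * alpha - INR m <= IZR (range_sum H (a + L) m - range_sum H a m)
  <= INR m * INR L * alpha + INR m.
Proof.
  revert a; induction m; intros a; simpl range_sum.
  - simpl. lra.
  - specialize (IHm (S a)). simpl Nat.add in IHm. specialize (Hbal a L).
    rewrite minus_IZR in *. rewrite !plus_IZR, S_INR. lra.
Qed.

Lemma height_gain_values m i :
  height_gain H m i = Int_part (INR m * alpha) \/
  height_gain H m i = (Int_part (INR m * alpha) + 1)%Z.
Proof.
  destruct (base_Int_part (INR m * alpha)). destruct (Hbal i m). unfold height_gain.
  assert (Lo : IZR (Int_part (INR m * alpha) - 1) < IZR (H (i + m)%nat - H i))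
    by (rewrite !minus_IZR; lra).
  assert (Hi : IZR (H (i + m)%nat - H i) < IZR (Int_part (INR m * alpha) + 2))
    by (rewrite minus_IZR, plus_IZR; lra).
  apply lt_IZR in Lo, Hi. lia.
Qed.

Lemma range_count_gain_bnd m a L :
  let k := Int_part (INR m * alpha) in
  INR (range_count (fun i => Z.eqb (height_gain H m i) (k + 1)) a L)
    <= INR L * frac (INR m * alpha) + INR m /\
  INR (range_count (fun i => Z.eqb (height_gain H m i) k) a L)
    <= INR L * (1 - frac (INR m * alpha)) + INR m.
Proof.
  intros k.
  destruct (range_sum_two_values (height_gain H m) k a L (height_gain_values m))
    as [Ehi Elo].
  pose proof (range_sum_increments H m a L) as Einc.
  pose proof (range_sum_height_bnd L m a) as Hbnd.
  pose proof (pos_INR L).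
  change (range_sum (height_gain H m) a L = (range_sum H (a + L) m - range_sum H a m)%Z)
    in Einc.
  unfold frac; fold k. rewrite <- Einc in Hbnd. split.
  - rewrite Ehi, plus_IZR, mult_IZR, <- !INR_IZR_INZ in Hbnd. nra.
  - rewrite Elo, minus_IZR, mult_IZR, plus_IZR, <- !INR_IZR_INZ in Hbnd. nra.
Qed.

Definition near_integer (x : R) : Prop := frac x <= 1/3 \/ 2/3 <= frac x.

Definition square_start (H : nat -> Z) (m i : nat) : bool :=
  Z.eqb (height_gain H m i) (height_gain H m (i + m)).

(* The gains over [i] and [i+m] differ only if one of them is the rarer value,
   and the rarer value occupies at most [5m] positions out of [12m]. *)
Lemma range_count_square_start m s : near_integer (INR m * alpha) ->
  (2 * m <= range_count (square_start H m) s (12 * m))%nat.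
Proof.
  intros Hnear. set (k := Int_part (INR m * alpha)).
  set (hi := fun i => Z.eqb (height_gain H m i) (k + 1)).
  set (lo := fun i => Z.eqb (height_gain H m i) k).
  assert (Hcover : forall q, (forall i, height_gain H m i <> height_gain H m (i + m) ->
      q i = true \/ q (i + m)%nat = true) ->
      (12 * m <= range_count (square_start H m) s (12 * m) + range_count q s (12 * m)
                 + range_count q (s + m) (12 * m))%nat).
  { intros q Hq. rewrite <- range_count_shift. apply range_count_cover. intros i.
    unfold square_start.
    destruct (Z.eqb_spec (height_gain H m i) (height_gain H m (i + m))) as [|Hne];
      [auto|destruct (Hq i Hne); auto]. }
  assert (Hrare : forall q, q = hi \/ q = lo -> forall i,
      height_gain H m i <> height_gain H m (i + m) -> q i = true \/ q (i + m)%nat = true).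
  { intros q Hq i Hne.
    destruct (height_gain_values m i) as [E|E], (height_gain_values m (i + m)) as [E'|E'];
      fold k in E, E'; rewrite ?E, ?E' in *; [congruence| | |congruence];
      destruct Hq as [-> | ->]; unfold hi, lo; rewrite ?E, ?E', ?Z.eqb_refl; auto. }
  pose proof (Hcover hi (Hrare hi (or_introl eq_refl))) as C1.
  pose proof (Hcover lo (Hrare lo (or_intror eq_refl))) as C2.
  destruct (range_count_gain_bnd m s (12 * m)) as [Hi1 Lo1].
  destruct (range_count_gain_bnd m (s + m) (12 * m)) as [Hi2 Lo2].
  fold k hi lo in Hi1, Lo1, Hi2, Lo2.
  apply INR_le. apply le_INR in C1, C2. rewrite !plus_INR in C1, C2.
  rewrite !mult_INR in *. simpl (INR 2) in *. simpl (INR 12) in *.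
  destruct Hnear; nra.
Qed.

End Heights.

Section PowerFree.

Variables (w : infword) (beta : R) (K : nat).
Hypothesis (Hpf : power_free beta w) (HK : beta <= INR K).

(* Two equal factors of length [M] at distance [d] form a factor with period [d]
   and exponent at least [M / d]. *)
Lemma power_free_no_repeat i d M : (0 < d)%nat -> (K * d <= M)%nat ->
  factor_at w i M <> factor_at w (i + d) M.
Proof.
  intros Hd HdM E.
  set (v := factor_at w i (d + M)).
  assert (Hv : length v = (d + M)%nat) by apply length_factor_at.
  assert (Pd : is_period v d).
  { split; auto. intros j Hj. rewrite Hv in Hj. unfold v. rewrite !nth_factor_at by lia.
    assert (Ej : nth j (factor_at w i M) la = nth j (factor_at w (i + d) M) la)
      by (rewrite E; auto).
    rewrite !nth_factor_at in Ej by lia.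
    replace (i + (j + d))%nat with (i + d + j)%nat by lia. auto. }
  destruct (min_period_exists v d Pd) as [p [Hpd Hmin]].
  assert (Hp : (0 < p)%nat) by apply Hmin.
  assert (Hne : v <> []) by (intros Ev; rewrite Ev in Hv; simpl in Hv; lia).
  assert (Hf : is_factor w v) by (exists i; rewrite Hv; reflexivity).
  pose proof (Hpf v p Hf Hne Hmin) as Hlt.
  rewrite Hv in Hlt.
  assert (HKp : (K * p <= d + M)%nat) by nia.
  apply le_INR in HKp. rewrite mult_INR in HKp. apply lt_INR in Hp. simpl in Hp.
  apply (Rmult_lt_compat_r (INR p)) in Hlt; auto.
  unfold Rdiv in Hlt. rewrite Rmult_assoc, Rinv_l in Hlt by lra.
  nra.
Qed.

Lemma factor_at_inj_close x y r : (x < y + r)%nat -> (y < x + r)%nat ->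
  factor_at w x (K * r + K * r) = factor_at w y (K * r + K * r) -> x = y.
Proof.
  intros Hxy Hyx E. destruct (lt_eq_lt_dec x y) as [[Hlt|]|Hlt]; [exfalso| |exfalso]; auto.
  - apply (power_free_no_repeat x (y - x) (K * r + K * r)); [lia|nia|].
    replace (x + (y - x))%nat with y by lia. auto.
  - apply (power_free_no_repeat y (x - y) (K * r + K * r)); [lia|nia|].
    replace (y + (x - y))%nat with x by lia. auto.
Qed.

End PowerFree.

Section AbelianSquares.

Variables (w : infword) (H : nat -> Z) (alpha beta : R) (K : nat).
Hypothesis (Hw : height w H) (Hbal : balanced H alpha).
Hypothesis (Hpf : power_free beta w) (HK : beta <= INR K) (HK1 : (1 <= K)%nat).

(* The starts of abelian squares of length [2Kr] in a window of length [12Kr] are spread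
   over [12K] blocks of length [r]; inside a block their squares are distinct. *)
Lemma abelian_squares_of_length r s n :
  near_integer (INR (K * r) * alpha) -> (14 * K * r <= n)%nat ->
  exists Lr : list word, NoDup Lr /\
    (forall v, In v Lr -> is_subfactor (factor_at w s n) v /\ abelian_square v /\
        length v = (K * r + K * r)%nat) /\
    (r <= 6 * length Lr)%nat.
Proof.
  intros Hnear Hn. set (m := (K * r)%nat).
  pose proof (range_count_square_start H alpha Hbal m s Hnear) as Hcount.
  destruct (range_count_pigeonhole (square_start H m) r (12 * K - 1) s) as [b [Hb Hblock]].
  replace (S (12 * K - 1)) with (12 * K)%nat in Hblock by lia.
  replace (12 * K * r)%nat with (12 * m)%nat in Hblock by (unfold m; lia).
  set (starts := filter (square_start H m) (seq (s + b * r) r)).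
  exists (map (fun i => factor_at w i (m + m)) starts). split; [|split].
  - apply NoDup_map_NoDup_ForallPairs; [|apply NoDup_filter, seq_NoDup].
    intros x y Hx Hy. apply filter_In in Hx as [Hx _], Hy as [Hy _].
    apply in_seq in Hx, Hy. apply (factor_at_inj_close w beta K Hpf HK); lia.
  - intros v Hv. apply in_map_iff in Hv as [i [<- Hi]].
    apply filter_In in Hi as [Hi Hsq]. apply in_seq in Hi. split; [|split].
    + apply is_subfactor_factor_at; unfold m in *; nia.
    + apply (abelian_square_factor_at w H Hw). apply Z.eqb_eq, Hsq.
    + apply length_factor_at.
  - rewrite length_map. unfold starts. rewrite range_count_filter. unfold m in *. nia.
Qed.

Lemma near_integer_or_double x : near_integer x \/ near_integer (2 * x).
Proof.
  unfold near_integer, frac. destruct (Int_part_bnd x) as [H1 H2].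
  set (z := Int_part x) in *.
  destruct (Rle_dec (x - IZR z) (1/3)); [left; left; auto|].
  destruct (Rle_dec (2/3) (x - IZR z)); [left; right; auto|].
  right. destruct (Rlt_dec (2 * (x - IZR z)) 1).
  - rewrite (Int_part_eq (2 * x) (2 * z)); rewrite ?mult_IZR; lra.
  - rewrite (Int_part_eq (2 * x) (2 * z + 1)); rewrite ?plus_IZR, ?mult_IZR; lra.
Qed.

(* Each [r] in [Q+1, Q+c] contributes the squares of length [2Kr] or [4Kr], according
   to which of [Kr alpha], [2Kr alpha] is near an integer; all these lengths differ. *)
Lemma abelian_squares_of_lengths Q s n c : (56 * K * Q <= n)%nat -> (c <= Q)%nat ->
  exists L : list word, NoDup L /\
    (forall v, In v L -> is_subfactor (factor_at w s n) v /\ abelian_square v /\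
       exists r, (Q + 1 <= r < Q + 1 + c)%nat /\
         (length v = (2 * K * r)%nat \/ length v = (4 * K * r)%nat)) /\
    (c * (Q + 1) <= 6 * length L)%nat.
Proof.
  intros Hn. induction c as [|c IH]; intros Hc.
  - exists []. split; [constructor|split; [intros v []|simpl; lia]].
  - destruct IH as [L [HL [HLv HLlen]]]; [lia|].
    set (r := (Q + 1 + c)%nat).
    assert (Hsel : exists r', (r' = r \/ r' = 2 * r)%nat /\ near_integer (INR (K * r') * alpha)).
    { destruct (near_integer_or_double (INR (K * r) * alpha)) as [N|N]; [exists r; auto|].
      exists (2 * r)%nat. split; auto. rewrite Nat.mul_comm, <- Nat.mul_assoc, mult_INR.
      simpl (INR 2). rewrite Nat.mul_comm, Rmult_assoc. exact N. }
    destruct Hsel as [r' [Hr' Hnear]].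
    destruct (abelian_squares_of_length r' s n Hnear) as [Lr [HLr [HLrv HLrlen]]];
      [unfold r in *; nia|].
    exists (Lr ++ L). split; [|split].
    + apply NoDup_app; auto. intros v Hv1 Hv2.
      destruct (HLrv v Hv1) as [_ [_ E1]]. destruct (HLv v Hv2) as [_ [_ [r0 [Hr0 E2]]]].
      assert (Hneq : (r' <> r0 /\ r' <> 2 * r0)%nat) by (unfold r in *; lia).
      destruct Hneq as [N1 N2].
      destruct E2 as [E2|E2]; rewrite E1 in E2;
        [apply N1|apply N2]; apply (Nat.mul_cancel_l _ _ (2 * K)); lia.
    + intros v Hv. apply in_app_or in Hv as [Hv|Hv].
      * destruct (HLrv v Hv) as [Hsub [Hsq E]]. repeat split; auto.
        exists r. split; [unfold r; lia|]. destruct Hr' as [-> | ->]; lia.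
      * destruct (HLv v Hv) as [Hsub [Hsq [r0 [Hr0 E]]]]. repeat split; auto.
        exists r0. split; auto. lia.
    + rewrite length_app. unfold r in *. lia.
Qed.

(* With [Q := n / (56K)], the lengths [r] in [Q+1, 2Q] give about [Q^2/6] squares. *)
Lemma many_abelian_squares_in_factor s n : (112 * K <= n)%nat ->
  has_many_ab_squares (factor_at w s n) (/ INR (12 * 56 * 56 * K * K) * INR n ^ 2).
Proof.
  intros Hn. set (Q := (n / (56 * K))%nat).
  assert (HQ1 : (56 * K * Q <= n)%nat) by apply Nat.Div0.mul_div_le.
  assert (HQ2 : (n < 56 * K * (Q + 1))%nat).
  { pose proof (Nat.div_mod n (56 * K)). pose proof (Nat.mod_upper_bound n (56 * K)). lia. }
  destruct (abelian_squares_of_lengths Q s n Q HQ1 (le_n Q)) as [L [HL [HLv HLlen]]].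
  exists L. split; [auto|split; [intros v Hv; apply HLv in Hv; tauto|]].
  assert (Hnn : (n * n <= 12 * 56 * 56 * K * K * length L)%nat).
  { assert (n * n <= (56 * K * (Q + 1)) * (56 * K * (Q + 1)))%nat by nia.
    assert (2 <= Q)%nat by nia. nia. }
  set (D := (12 * 56 * 56 * K * K)%nat) in *.
  assert (HD : 0 < INR D) by (apply lt_0_INR; unfold D; nia).
  apply le_INR in Hnn. rewrite !mult_INR in Hnn.
  apply (Rmult_le_reg_l (INR D)); [auto|].
  rewrite <- Rmult_assoc, Rinv_r by lra. lra.
Qed.

End AbelianSquares.

Definition sturmian_height (upper : bool) (alpha rho : R) (j : nat) : Z :=
  if upper then ceilZ (rho + INR j * alpha) else Int_part (rho + INR j * alpha).

Lemma sturmian_height_spec upper alpha rho : 0 < alpha < 1 ->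
  height (sturmian upper alpha rho) (sturmian_height upper alpha rho).
Proof.
  intros Ha j. unfold sturmian, sturmian_height.
  replace (rho + INR (S j) * alpha) with (rho + INR j * alpha + alpha) by (rewrite S_INR; ring).
  destruct upper; unfold sturmian_upper, sturmian_lower.
  - destruct (ceilZ_add_step (rho + INR j * alpha) alpha Ha) as [[A [B E]]|[A E]].
    + right. destruct (Rlt_dec _ _); [|contradiction]. destruct (Rle_dec _ _); tauto.
    + left. destruct (Rlt_dec _ _); [destruct (Rle_dec _ _)|]; tauto.
  - destruct (Int_part_add_step (rho + INR j * alpha) alpha Ha) as [[A E]|[A E]];
      [right|left]; destruct (Rlt_dec _ _); tauto.
Qed.

Lemma sturmian_height_balanced upper alpha rho :
  balanced (sturmian_height upper alpha rho) alpha.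
Proof.
  intros i L. unfold sturmian_height. rewrite plus_INR.
  replace (rho + (INR i + INR L) * alpha) with (rho + INR i * alpha + INR L * alpha) by ring.
  destruct upper.
  - pose proof (ceilZ_bnd (rho + INR i * alpha)).
    pose proof (ceilZ_bnd (rho + INR i * alpha + INR L * alpha)). lra.
  - pose proof (Int_part_bnd (rho + INR i * alpha)).
    pose proof (Int_part_bnd (rho + INR i * alpha + INR L * alpha)). lra.
Qed.

Theorem corollary3 (alpha rho beta : R) (upper : bool) :
  0 < alpha < 1 -> irrational alpha -> 0 <= rho < 1 ->
  2 <= beta -> power_free beta (sturmian upper alpha rho) ->
  unif_ab_square_rich (sturmian upper alpha rho).
Proof.
  intros Ha _ _ Hb Hpf.
  destruct (INR_archimed 1 beta) as [K HK]; [lra|]. rewrite Rmult_1_r in HK.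
  assert (HK1 : (1 <= K)%nat) by (apply INR_le; simpl; lra).
  exists (/ INR (12 * 56 * 56 * K * K)). split.
  { apply Rinv_0_lt_compat, lt_0_INR. nia. }
  exists (112 * K)%nat. intros n Hn u [s Hu] Hlen. rewrite Hlen in Hu. subst u.
  apply (many_abelian_squares_in_factor _ (sturmian_height upper alpha rho) alpha beta);
    auto using sturmian_height_spec, sturmian_height_balanced; lra.
Qed.
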